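(* Let $s$ be a Sturmian word. Then there exists a coloring $c:\mathcal F^+ s\to\{0,1,2\}$ of the non-empty factors of $s$ such that for every factorization $s=V_1V_2\cdots V_n\cdots$ of $s$ into non-empty factors $V_i$, there exist integers $i,j$ with $c(V_i)\neq c(V_j)$. (For instance, $c(V)=0$ if $V$ is not a prefix of $s$, $c(V)=1$ if $V$ is a prefix of $s$ with $r_s(V)=a$, and $c(V)=2$ if $V$ is a prefix of $s$ with $r_s(V)=b$.)
   Context: A Sturmian word is an infinite word $s\in\{a,b\}^{\omega}$ that is aperiodic (not ultimately periodic) and balanced: for all factors $u,v$ of $s$ with $|u|=|v|$ one has $||u|_x-|v|_x|\le 1$ for $x\in\{a,b\}$, where $|u|_x$ is the number of occurrences of $x$ in $u$. $\mathcal F^+ s$ is the set of non-empty factors of $s$. A non-empty factor $w$ of $s$ is rich in the letter $z\in\{a,b\}$ if there is a factor $v$ of $s$ with $|v|=|w|$ and $|w|_z>|v|_z$; every non-empty factor of a Sturmian word is rich in exactly one letter, and $r_s(w)\in\{a,b\}$ denotes that letter. *)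

From mathcomp Require Import all_boot.
Set Implicit Arguments. Unset Strict Implicit. Unset Printing Implicit Defensive.

(* Alphabet {a,b}: letter a is [false], letter b is [true]. *)
Definition letter := bool.
Definition la : letter := false.
Definition lb : letter := true.

Definition infword := nat -> letter.

Definition factor_at (s : infword) (i n : nat) : seq letter :=
  mkseq (fun k => s (i + k)) n.

Definition is_factor (s : infword) (u : seq letter) : Prop :=
  exists i, u = factor_at s i (size u).

Definition is_nefactor (s : infword) (u : seq letter) : Prop :=
  size u > 0 /\ is_factor s u.

Definition occ (x : letter) (u : seq letter) : nat := count_mem x u.

Definition ultimately_periodic (s : infword) : Prop :=
  exists p n0, 0 < p /\ forall n, n0 <= n -> s (n + p) = s n.

Definition balanced (s : infword) : Prop :=
  forall u v, is_factor s u -> is_factor s v -> size u = size v ->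
  forall x : letter, occ x u <= occ x v + 1 /\ occ x v <= occ x u + 1.

Definition sturmian (s : infword) : Prop :=
  ~ ultimately_periodic s /\ balanced s.

(* A factorization s = V_0 V_1 V_2 ... into non-empty factors is given by
   its cut positions: f 0 = 0 and f strictly increasing; V_i = s[f i, f (i+1)). *)
Definition factorization (f : nat -> nat) : Prop :=
  f 0 = 0 /\ forall n, f n < f n.+1.

Definition block (s : infword) (f : nat -> nat) (i : nat) : seq letter :=
  factor_at s (f i) (f i.+1 - f i).

From mathcomp Require Import all_boot zify.
From Stdlib Require Import Classical ClassicalEpsilon.
Set Implicit Arguments. Unset Strict Implicit. Unset Printing Implicit Defensive.

(* The colouring: a factor V gets colour 0 if it is not a prefix of s, colour 1
   if it is a prefix containing the maximal number of b's among factors of its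
   length, and colour 2 otherwise (then, by balance, it has the maximal number
   of a's).  A monochromatic factorization would therefore cut s into prefixes
   V_0 V_1 ... that are all x-maximal for one letter x; we show this is
   impossible for an aperiodic balanced word.

   Writing s_q for the suffix of s at position q, aperiodicity makes every
   x-maximal window s[q, q+n) push s_(q+n) strictly below s_q in the
   lexicographic order where x is the larger letter.  Concatenations of
   x-maximal windows are x-maximal, so the suffixes at the cut points decrease
   strictly.  Since all blocks are prefixes, their lengths are bounded by the
   first position d where s_(f 1) and s differ.  A balanced aperiodic word has,
   for each period p, only boundedly long p-periodic stretches (a counting
   argument on windows); hence consecutive cut suffixes differ within a fixed
   length B, and the binary value of their length-B prefixes is a strictly
   decreasing sequence of naturals: contradiction. *)

Lemma sum_by_residues (F : nat -> nat) p r :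
  \sum_(y < r * p) F y = \sum_(j < p) \sum_(i < r) F (j + i * p).
Proof.
elim: r => [|r IH].
  by rewrite mul0n big_ord0 big1 // => j _; rewrite big_ord0.
rewrite mulSnr big_split_ord /= IH -big_split /=; apply: eq_bigr => j _.
by rewrite big_ord_recr /= (addnC (r * p)).
Qed.

Lemma count_prefix_mono (P : nat -> bool) a b :
  a <= b -> \sum_(y < a) P y <= \sum_(y < b) P y.
Proof.
move=> hab; rewrite -(subnKC hab) big_split_ord /=; exact: leq_addr.
Qed.

Lemma sparse_progressions (P : nat -> bool) p : 0 < p ->
  (forall j r, \sum_(i < r) P (j + i * p) <= 1) ->
  ~ (forall N, exists y, N <= y /\ P y).
Proof.
move=> hp hsparse hunb.
have many : forall k, exists N, k <= \sum_(y < N) P y.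
  elim=> [|k [N hN]]; first by exists 0.
  have [y [hNy Py]] := hunb N; exists y.+1.
  rewrite big_ord_recr /= Py addn1 ltnS.
  exact: leq_trans hN (count_prefix_mono P hNy).
have [N hN] := many p.+1.
have few : \sum_(y < N * p) P y <= p.
  rewrite (sum_by_residues (fun y => nat_of_bool (P y))).
  rewrite -[leqRHS]muln1 -[p in p * 1]card_ord -sum_nat_const.
  by apply: leq_sum => j _; apply: hsparse.
have hNp : N <= N * p by rewrite leq_pmulr.
by have := leq_trans hN (leq_trans (count_prefix_mono P hNp) few); rewrite ltnn.
Qed.

Lemma no_infinite_descent (v : nat -> nat) : ~ (forall k, v k.+1 < v k).
Proof.
move=> hdec; have bound : forall k, v k + k <= v 0.
  by elim=> [|k IH]; [rewrite addn0 | have := hdec k; lia].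
by have := bound (v 0).+1; lia.
Qed.

(* The binary number whose digits, most significant first, are the truth
   values of [w i == x] for i < n; it is monotone for the lexicographic order
   where x is the larger letter. *)
Fixpoint weight (w : nat -> letter) (x : letter) (n : nat) : nat :=
  if n is n'.+1 then 2 * weight w x n' + (w n' == x) else 0.

Lemma weightS w x n : weight w x n.+1 = 2 * weight w x n + (w n == x).
Proof. by []. Qed.

Lemma weight_ext w w' x n :
  (forall i, i < n -> w i = w' i) -> weight w x n = weight w' x n.
Proof.
elim: n => [|n IH] h //=; rewrite IH ?h // => i hi; apply: h; exact: ltnW.
Qed.

Lemma weight_lt w w' x e n :
  (forall i, i < e -> w i = w' i) -> w e != x -> w' e = x -> e < n ->
  weight w x n < weight w' x n.
Proof.
move=> hagree hwe hw'e hen; rewrite -(subnKC hen).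
elim: (n - e.+1) => [|m IH].
  by rewrite addn0 /= (weight_ext x hagree) hw'e eqxx (negbTE hwe) ltn_add2l.
have double_lt a a' (b b' : bool) : a < a' -> 2 * a + b < 2 * a' + b'.
  by case: b; case: b' => /=; lia.
by rewrite addnS !weightS; exact: double_lt.
Qed.

Section Windows.

Variable s : infword.

Definition cnt (x : letter) (q n : nat) : nat := occ x (factor_at s q n).

Lemma cnt_last x q n : cnt x q n.+1 = cnt x q n + (s (q + n) == x).
Proof. by rewrite /cnt /occ /factor_at mkseqS -cats1 count_cat /= addn0. Qed.

Lemma cnt_split x q m n : cnt x q (m + n) = cnt x q m + cnt x (q + m) n.
Proof.
elim: n => [|n IH]; first by rewrite !addn0.
by rewrite addnS !cnt_last IH addnA addnA.
Qed.

Lemma cnt1 x q : cnt x q 1 = (s q == x).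
Proof. by rewrite cnt_last addn0. Qed.

Lemma cnt_slide x q p : cnt x q.+1 p + (s q == x) = cnt x q p + (s (q + p) == x).
Proof.
have e1 := cnt_split x q 1 p; rewrite add1n addn1 cnt1 in e1.
have e2 := cnt_split x q p 1; rewrite addn1 cnt1 in e2.
by rewrite e1 in e2; lia.
Qed.

Lemma cnt_ext x p q n :
  (forall i, i < n -> s (p + i) = s (q + i)) -> cnt x p n = cnt x q n.
Proof.
elim: n => [|n IH] h //; rewrite !cnt_last IH ?h // => i hi; apply: h.
exact: ltnW.
Qed.

Lemma cnt_compl q n : cnt la q n + cnt lb q n = n.
Proof.
elim: n => [|n IH] //; rewrite !cnt_last; move: IH.
by case: (s (q + n)) => /=; lia.
Qed.

Definition max_window (x : letter) (q n : nat) : Prop :=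
  forall q', cnt x q' n <= cnt x q n.

Lemma max_window_cat x q m n :
  max_window x q m -> max_window x (q + m) n -> max_window x q (m + n).
Proof.
move=> hm hn q'; rewrite !cnt_split; apply: leq_add; [exact: hm | exact: hn].
Qed.

Definition below (x : letter) (a b : nat) : Prop :=
  exists d, [/\ forall i, i < d -> s (a + i) = s (b + i), s (a + d) != x
              & s (b + d) = x].

Lemma below_agree_contra x a b c d :
  (forall i, i < d -> s (a + i) = s (b + i)) -> s (a + d) != x ->
  s (b + d) = x -> (forall i, i <= d -> s (c + i) = s (b + i)) ->
  ~ below x c a.
Proof.
move=> hab had hbd hcb [e [hca hce hae]].
case: (ltngtP e d) => hed.
- by move: hce; rewrite hcb ?(ltnW hed) // -hab // hae eqxx.
- by move: had; rewrite -hca // hcb // hbd eqxx.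
- by move: hce; rewrite hed hcb // hbd eqxx.
Qed.

Definition stretch (p q B : nat) : Prop :=
  forall i, i < B -> s (q + i) = s (q + p + i).

Lemma stretch_le p q B B' : B <= B' -> stretch p q B' -> stretch p q B.
Proof. by move=> hB hst i hi; apply: hst; exact: leq_trans hB. Qed.

Lemma stretch_mismatch p q B :
  ~ stretch p q B -> exists i, i < B /\ s (q + i) != s (q + p + i).
Proof.
move=> hno; apply: NNPP => hall; apply: hno => i hi; apply/eqP.
by apply: NNPP => hne; apply: hall; exists i; split => //; apply/negP.
Qed.

(* Inside a p-periodic stretch all windows of length p have the same count,
   so a window of length r*p counts r times a window of length p. *)
Lemma stretch_cnt x p q B r :
  stretch p q B -> r * p <= B + p -> cnt x q (r * p) = r * cnt x q p.
Proof.
move=> hst; have slide : forall i, i <= B -> cnt x (q + i) p = cnt x q p.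
  elim=> [|i IH] hi; first by rewrite addn0.
  have := cnt_slide x (q + i) p.
  rewrite -(addnA q i p) (addnC i p) addnA -hst; last by lia.
  by rewrite addnS IH; [lia | exact: ltnW].
elim: r => [|r IH] hr //; rewrite mulSnr cnt_split IH; last by lia.
by rewrite slide ?mulSnr //; lia.
Qed.

Lemma cnt_progression x j p r :
  cnt x j (r * p) = \sum_(i < r) cnt x (j + i * p) p.
Proof.
elim: r => [|r IH]; first by rewrite big_ord0.
by rewrite mulSnr cnt_split IH big_ord_recr.
Qed.

End Windows.

Section Aperiodic.

Variable s : infword.
Hypothesis hb : balanced s.
Hypothesis hnp : ~ ultimately_periodic s.

Lemma cnt_balanced x q q' n : cnt s x q n <= cnt s x q' n + 1.
Proof.
have fac r : is_factor s (factor_at s r n) by exists r; rewrite size_mkseq.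
have [] // := hb (fac q) (fac q') _ x; by rewrite !size_mkseq.
Qed.

Lemma max_window_compl q n : ~ max_window s lb q n -> max_window s la q n.
Proof.
move=> hno q'; have [q0 /negP hq0] := not_all_ex_not _ _ hno.
have := cnt_balanced lb q0 q' n; have := cnt_compl s q n.
by have := cnt_compl s q' n; lia.
Qed.

(* An x-maximal window s[p, p+n) pushes s_(p+n) below s_p: otherwise, at the
   first difference d the letter x enters s_(p+n), and the window starting at
   p+d+1 would contain one more x than s[p, p+n). *)
Lemma max_window_below x p n : 0 < n -> max_window s x p n -> below s x (p + n) p.
Proof.
move=> hn hmax.
have hex : exists i, s (p + i) != s (p + n + i).
  apply: NNPP => hall; apply: hnp; exists n, p; split=> // m hm.
  have /negP/negPn/eqP := not_ex_all_not _ _ hall (m - p).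
  by rewrite -addnA (addnC n) addnA !subnKC.
case: (ex_minnP hex) => d hd hmin.
have agree i : i < d -> s (p + n + i) = s (p + i).
  by move=> hi; apply/eqP; rewrite eq_sym; apply: contraTT hi => /hmin; rewrite -leqNgt.
case hx: (s (p + d) == x).
  by exists d; split=> //; move/eqP: hx hd => ->; rewrite eq_sym.
have hx' : s (p + n + d) = x.
  by move: hd hx; case: (s (p + d)) (s (p + n + d)) => [] []; move: (x) => [].
have e1 := cnt_split s x p n d.+1; rewrite cnt_last hx' eqxx addnA in e1.
have e2 := cnt_split s x p d.+1 n; rewrite cnt_last hx addn0 in e2.
have e3 : cnt s x (p + n) d = cnt s x p d by apply: cnt_ext.
have := hmax (p + d.+1); rewrite (addnC n d.+1) in e1; lia.
Qed.

(* The b-count of windows of length p changes infinitely often, for a change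
   at every position from some point on would make s eventually p-periodic. *)
Lemma cnt_not_eventually_const p g N : 0 < p ->
  exists y, N <= y /\ cnt s lb y p != g.
Proof.
move=> hp; apply: NNPP => hfin; apply: hnp; exists p, N; split=> // n hn.
have eq_g y : N <= y -> cnt s lb y p = g.
  by move=> hy; apply/eqP/negPn/negP => hne; apply: hfin; exists y.
have := cnt_slide s lb n p; rewrite !eq_g ?(leqW hn) // => /addnI.
by case: (s n) (s (n + p)) => [] [].
Qed.

(* Arbitrarily long p-periodic stretches are impossible.  Their windows of length
   p all carry the same b-count g, so by balance every progression of windows
   of step p sums to r*g up to 1; since counts never straddle g, each such
   progression meets at most one window whose count differs from g, while such
   windows occur infinitely often. *)
Section PeriodicStretches.

Variable p : nat.
Hypothesis long : forall B, exists q, stretch s p q B.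

Lemma stretch_count_unique :
  exists g, forall q B, p <= B -> stretch s p q B -> cnt s lb q p = g.
Proof.
have [q0 hq0] := long p; exists (cnt s lb q0 p) => q B hpB hq.
have e : cnt s lb q (2 * p) = 2 * cnt s lb q p by apply: (stretch_cnt _ hq); lia.
have e0 : cnt s lb q0 (2 * p) = 2 * cnt s lb q0 p.
  by apply: (stretch_cnt _ hq0); lia.
have := cnt_balanced lb q q0 (2 * p); have := cnt_balanced lb q0 q (2 * p).
by rewrite e e0; lia.
Qed.

Variable g : nat.
Hypothesis stretch_g :
  forall q B, p <= B -> stretch s p q B -> cnt s lb q p = g.

Lemma progression_near j r :
  \sum_(i < r) cnt s lb (j + i * p) p <= r * g + 1 /\
  r * g <= \sum_(i < r) cnt s lb (j + i * p) p + 1.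
Proof.
have [q hq] := long (r * p + p).
have e : cnt s lb q (r * p) = r * g.
  by rewrite -(stretch_g (leq_addl _ _) hq); apply: (stretch_cnt _ hq); lia.
by rewrite -cnt_progression -e; split; apply: cnt_balanced.
Qed.

Lemma counts_one_sided :
  (forall y, g <= cnt s lb y p) \/ (forall y, cnt s lb y p <= g).
Proof.
apply: NNPP => /not_or_and [/not_all_ex_not [y1 /negP h1] /not_all_ex_not [y2 /negP h2]].
by have := cnt_balanced lb y2 y1 p; lia.
Qed.

Lemma progression_sparse j r : \sum_(i < r) (cnt s lb (j + i * p) p != g) <= 1.
Proof.
have [q0 hq0] := long p; have g_q0 := stretch_g (leqnn p) hq0.
have near y : cnt s lb y p <= g + 1 /\ g <= cnt s lb y p + 1.
  by rewrite -g_q0; split; apply: cnt_balanced.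
have const_sum : \sum_(i < r) g = r * g by rewrite sum_nat_const card_ord.
have [lo hi] := progression_near j r.
case: counts_one_sided => hside.
- have dev : \sum_(i < r) cnt s lb (j + i * p) p =
             r * g + \sum_(i < r) (cnt s lb (j + i * p) p != g).
    rewrite -const_sum -big_split; apply: eq_bigr => i _.
    by have := hside (j + i * p); have := near (j + i * p); case: eqP => /= ; lia.
  by lia.
- have dev : \sum_(i < r) cnt s lb (j + i * p) p +
             \sum_(i < r) (cnt s lb (j + i * p) p != g) = r * g.
    rewrite -const_sum -big_split; apply: eq_bigr => i _.
    by have := hside (j + i * p); have := near (j + i * p); case: eqP => /= ; lia.
  by lia.
Qed.

End PeriodicStretches.

Lemma stretch_bounded p : 0 < p -> exists B, forall q, ~ stretch s p q B.
Proof.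
move=> hp; apply: NNPP => hno.
have long B : exists q, stretch s p q B.
  by apply: NNPP => hB; apply: hno; exists B => q hq; apply: hB; exists q.
have [g hg] := stretch_count_unique long.
apply: (sparse_progressions (P := fun y => cnt s lb y p != g) hp).
  exact: progression_sparse hg.
by move=> N; apply: cnt_not_eventually_const.
Qed.

Lemma stretch_bounded_upto d :
  exists B, forall p, 0 < p -> p <= d -> forall q, ~ stretch s p q B.
Proof.
elim: d => [|d [B hB]]; first by exists 0 => p hp; rewrite leqNgt hp.
have [B1 hB1] := stretch_bounded (ltn0Sn d).
exists (B + B1) => p hp hpd q hst; case: (ltngtP p d.+1) hpd => // hpd _.
  by apply: (hB p hp hpd q); apply: stretch_le hst; exact: leq_addr.
by rewrite hpd in hst; apply: (hB1 q); apply: stretch_le hst; exact: leq_addl.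
Qed.

Section MaximalPrefixFactorization.

Variables (x : letter) (f : nat -> nat).
Hypothesis hf : factorization f.
Hypothesis prefix_blocks : forall k i, i < f k.+1 - f k -> s (f k + i) = s i.
Hypothesis max_blocks : forall k, max_window s x (f k) (f k.+1 - f k).

Lemma cut_increasing j k : j < k -> f j < f k.
Proof.
have [_ finc] := hf; elim: k => [|k IH] //; rewrite ltnS leq_eqVlt.
by case/orP=> [/eqP -> | /IH hjk]; [|apply: ltn_trans hjk _].
Qed.

Lemma cut_max_window j k : j < k -> max_window s x (f j) (f k - f j).
Proof.
elim: k => [|k IH] //; rewrite ltnS leq_eqVlt => /orP [/eqP -> | hjk].
  exact: max_blocks.
have hj := cut_increasing hjk; have hk := cut_increasing (ltnSn k).
have -> : f k.+1 - f j = (f k - f j) + (f k.+1 - f k) by lia.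
apply: max_window_cat; first exact: IH.
by have -> : f j + (f k - f j) = f k by lia.
Qed.

Lemma cut_suffixes_decrease j k : j < k -> below s x (f k) (f j).
Proof.
move=> hjk; have hj := cut_increasing hjk.
have hpos : 0 < f k - f j by rewrite subn_gt0.
by have := max_window_below hpos (cut_max_window hjk); rewrite subnKC // ltnW.
Qed.

(* Blocks after the first are no longer than the first difference d between
   s_(f 1) and s: a longer prefix block at f k would agree with s up to d,
   making s_(f k) lie above s_(f 1). *)
Lemma block_length_bounded : exists d, forall k, 0 < k -> f k.+1 - f k <= d.
Proof.
have [f0 _] := hf.
have [d [agree d1 d2]] := cut_suffixes_decrease (ltn0Sn 0).
exists d => k hk; rewrite leqNgt; apply/negP => hlong.
have pk i : i <= d -> s (f k + i) = s (f 0 + i).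
  by move=> hi; rewrite f0 add0n prefix_blocks //; exact: leq_ltn_trans hlong.
case: (ltngtP k 1) hk => // hk1 _.
  exact: below_agree_contra agree d1 d2 pk (cut_suffixes_decrease hk1).
by have := pk d (leqnn d); rewrite hk1 d2 => same; rewrite same eqxx in d1.
Qed.

(* Consecutive cut suffixes differ within a fixed length B, so their weights
   on B letters decrease strictly. *)
Lemma cut_weights_decrease : exists B, forall k, 0 < k ->
  weight (fun i => s (f k.+1 + i)) x B < weight (fun i => s (f k + i)) x B.
Proof.
have [d hd] := block_length_bounded; have [B hB] := stretch_bounded_upto d.
exists B => k hk.
have [e [agree he he']] := cut_suffixes_decrease (ltnSn k).
have hlen := cut_increasing (ltnSn k).
have hpos : 0 < f k.+1 - f k by rewrite subn_gt0.
have [i [hi]] := stretch_mismatch (hB _ hpos (hd k hk) (f k)).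
rewrite subnKC ?(ltnW hlen) // => hmis.
have hei : e <= i.
  by rewrite leqNgt; apply/negP => hie; rewrite (agree i hie) eqxx in hmis.
exact: weight_lt agree he he' (leq_ltn_trans hei hi).
Qed.

Lemma no_maximal_prefix_factorization : False.
Proof.
have [B hB] := cut_weights_decrease.
apply: (no_infinite_descent (v := fun k => weight (fun i => s (f k.+1 + i)) x B)).
by move=> k; apply: hB.
Qed.

End MaximalPrefixFactorization.

End Aperiodic.

Definition b_maximal (s : infword) (V : seq letter) : Prop :=
  forall q, cnt s lb q (size V) <= occ lb V.

Definition color (s : infword) (V : seq letter) : 'I_3 :=
  if V == factor_at s 0 (size V) then
    if excluded_middle_informative (b_maximal s V) then Ordinal (isT : 1 < 3)
    else Ordinal (isT : 2 < 3)
  else ord0.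

Lemma color_prefix s V V' : color s V = color s V' ->
  V' == factor_at s 0 (size V') ->
  V == factor_at s 0 (size V) /\ (b_maximal s V <-> b_maximal s V').
Proof.
move=> + pre'; rewrite /color pre'.
case: excluded_middle_informative => hV'; case: (V == _) => //;
  case: excluded_middle_informative => hV // _; by split.
Qed.

Lemma size_block s f k : size (block s f k) = f k.+1 - f k.
Proof. exact: size_mkseq. Qed.

Lemma block_prefix s f k : block s f k == factor_at s 0 (size (block s f k)) ->
  forall i, i < f k.+1 - f k -> s (f k + i) = s i.
Proof.
rewrite size_block => /eqP e i hi.
by have := congr1 (nth la ^~ i) e; rewrite /block /factor_at !nth_mkseq.
Qed.

Lemma b_maximal_block s f k :
  b_maximal s (block s f k) <-> max_window s lb (f k) (f k.+1 - f k).
Proof. by rewrite /b_maximal size_block. Qed.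

Theorem mainTheorem8 (s : infword) (hs : sturmian s) :
  exists c : seq letter -> 'I_3,
    forall f : nat -> nat, factorization f ->
      exists i j, c (block s f i) != c (block s f j).
Proof.
case: hs => hnp hb; exists (color s) => f hf.
apply: NNPP => hconst.
have same k : color s (block s f k) = color s (block s f 0).
  by apply/eqP/negPn/negP => hne; apply: hconst; exists k, 0.
have prefix0 : block s f 0 == factor_at s 0 (size (block s f 0)).
  by have [f0 _] := hf; rewrite size_block /block f0.
have prefix k := block_prefix (color_prefix (same k) prefix0).1.
have max_iff k := (color_prefix (same k) prefix0).2.
case: (classic (b_maximal s (block s f 0))) => hmax0.
- apply: (no_maximal_prefix_factorization hb hnp (x := lb) hf prefix) => k.
  by apply/b_maximal_block/max_iff.
- apply: (no_maximal_prefix_factorization hb hnp (x := la) hf prefix) => k.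
  by apply: max_window_compl => // /b_maximal_block /max_iff.
Qed.
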